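(* Let $\alpha>-1$ and define $c_1^*(\alpha,x)=0$ and, for $i=1,2,3,\ldots$, $$c_{2i}^*(\alpha,x)=\frac{4(-1)^{i+1}}{(2i)!}\binom{\alpha+1}{i-1}\,{}_2F_1\!\left(\begin{matrix}-i+1,\;\alpha+\frac52-i\\ \frac12\end{matrix};x^2\right),$$ $$c_{2i+1}^*(\alpha,x)=\frac{8(-1)^{i+1}}{(2i+1)!}\binom{\alpha}{i-1}(\alpha+1)\,x\,{}_2F_1\!\left(\begin{matrix}-i+1,\;\alpha+\frac52-i\\ \frac32\end{matrix};x^2\right).$$ Then $$\sum_{i=1}^\infty c_i^*(\alpha,-1)=2\,{}_1F_1\!\left(\begin{matrix}-\alpha-1\\ 3\end{matrix};2\right),\qquad \sum_{i=1}^\infty c_i^*(\alpha,1)=2\,{}_1F_1\!\left(\begin{matrix}-\alpha-1\\ 3\end{matrix};-2\right).$$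
   Context: $(a)_k$ is the Pochhammer symbol, $\binom{\gamma}{m}$ the generalized binomial coefficient, ${}_2F_1$ and ${}_1F_1$ the standard hypergeometric series $\sum_k\frac{(a)_k(b)_k}{(c)_k}\frac{z^k}{k!}$ and $\sum_k\frac{(a)_k}{(b)_k}\frac{z^k}{k!}$; the ${}_2F_1$'s above terminate. *)

From Stdlib Require Import Reals Arith.
From Coquelicot Require Import Coquelicot.
Open Scope R_scope.

Fixpoint poch (a : R) (k : nat) : R :=
  match k with
  | O => 1
  | S k' => poch a k' * (a + INR k')
  end.

Fixpoint falling (g : R) (m : nat) : R :=
  match m with
  | O => 1
  | S m' => falling g m' * (g - INR m')
  end.

Definition gbinom (g : R) (m : nat) : R := falling g m / INR (fact m).

Definition hyp2F1 (a b c z : R) : R :=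
  Series (fun k => poch a k * poch b k / poch c k * z ^ k / INR (fact k)).

Definition hyp1F1 (a b z : R) : R :=
  Series (fun k => poch a k / poch b k * z ^ k / INR (fact k)).

(* c_n^*(alpha, x) for n >= 1 (value at n = 0 is irrelevant, set to 0). *)
Definition cstar (alpha x : R) (n : nat) : R :=
  match n with
  | O => 0
  | 1%nat => 0
  | _ =>
    let i := Nat.div2 n in
    if Nat.even n then
      4 * (-1) ^ (i + 1) / INR (fact (2 * i)) * gbinom (alpha + 1) (i - 1)
        * hyp2F1 (- INR i + 1) (alpha + 5 / 2 - INR i) (1 / 2) (x ^ 2)
    else
      8 * (-1) ^ (i + 1) / INR (fact (2 * i + 1)) * gbinom alpha (i - 1)
        * (alpha + 1) * x
        * hyp2F1 (- INR i + 1) (alpha + 5 / 2 - INR i) (3 / 2) (x ^ 2)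
  end.

From Stdlib Require Import Reals Arith Lra Lia.
From Coquelicot Require Import Coquelicot.
Open Scope R_scope.

(* For x = 1 or x = -1 the terminating 2F1 in c*_n(alpha, x) is evaluated by
   Chu-Vandermonde, 2F1(-m, b; c; 1) = (c - b)_m / (c)_m.  Together with
   (2m)! = 4^m m! (1/2)_m, (2m+1)! = 4^m m! (3/2)_m and the splitting
   (a)_(2m) = (a)_m (a + m)_m, this makes c*_(n+2)(alpha, x) exactly twice the
   n-th term of 1F1(-alpha-1; 3; -2x), a series dominated by the exponential
   series. *)

Lemma poch_add a m n : poch a (m + n) = poch a m * poch (a + INR m) n.
Proof.
  induction n as [|n IH]; simpl.
  - rewrite Nat.add_0_r; ring.
  - rewrite Nat.add_succ_r; simpl; rewrite IH, plus_INR; ring.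
Qed.

Lemma poch_succ_shift a k : poch a (S k) = a * poch (a + 1) k.
Proof. rewrite <- Nat.add_1_l, poch_add; simpl; ring. Qed.

Lemma poch_pred_succ a k : poch (a - 1) (S k) = poch a (S k) - INR (S k) * poch a k.
Proof.
  rewrite poch_succ_shift; replace (a - 1 + 1) with a by ring.
  rewrite S_INR; simpl; ring.
Qed.

Lemma poch_pos a k : 0 < a -> 0 < poch a k.
Proof.
  intro Ha; induction k as [|k IH]; simpl; [lra|].
  pose proof (pos_INR k); apply Rmult_lt_0_compat; lra.
Qed.

Lemma poch_opp_INR_eq0 n k : (n < k)%nat -> poch (- INR n) k = 0.
Proof.
  induction k as [|k IH]; intro Hnk; [lia|]; simpl.
  destruct (Nat.eq_dec n k) as [->|]; [ring|].
  rewrite IH by lia; ring.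
Qed.

Lemma poch_abs_le a b k : 1 <= b -> Rabs (poch a k) <= (Rabs a + 1) ^ k * poch b k.
Proof.
  intro Hb; induction k as [|k IH]; simpl; [rewrite Rabs_R1; lra|].
  pose proof (pos_INR k); pose proof (Rabs_pos a).
  pose proof (Rabs_triang a (INR k)); rewrite (Rabs_pos_eq (INR k)) in * by lra.
  rewrite Rabs_mult.
  replace ((Rabs a + 1) * (Rabs a + 1) ^ k * (poch b k * (b + INR k)))
    with ((Rabs a + 1) ^ k * poch b k * ((Rabs a + 1) * (b + INR k))) by ring.
  apply Rmult_le_compat; auto using Rabs_pos; nra.
Qed.

Definition hyp2F1_term (a b c z : R) (k : nat) : R :=
  poch a k * poch b k / poch c k * z ^ k / INR (fact k).

Definition hyp1F1_term (a b z : R) (k : nat) : R :=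
  poch a k / poch b k * z ^ k / INR (fact k).

Lemma hyp2F1_term_contiguous a b c z k : 0 < c ->
  hyp2F1_term (a - 1) b c z (S k)
  = hyp2F1_term a b c z (S k) - b / c * z * hyp2F1_term a (b + 1) (c + 1) z k.
Proof.
  intro Hc; unfold hyp2F1_term.
  rewrite poch_pred_succ, !(poch_succ_shift _ k), fact_simpl, mult_INR.
  pose proof (poch_pos (c + 1) k ltac:(lra)); pose proof (INR_fact_neq_0 k).
  pose proof (pos_INR k); rewrite S_INR; simpl; field; repeat split; lra.
Qed.

Lemma hyp2F1_partial_contiguous a b c z N : 0 < c ->
  sum_f_R0 (hyp2F1_term (a - 1) b c z) (S N)
  = sum_f_R0 (hyp2F1_term a b c z) (S N)
    - b / c * z * sum_f_R0 (hyp2F1_term a (b + 1) (c + 1) z) N.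
Proof.
  intro Hc.
  rewrite !(decomp_sum _ (S N)) by lia; simpl pred.
  replace (hyp2F1_term (a - 1) b c z 0) with (hyp2F1_term a b c z 0)
    by (unfold hyp2F1_term; simpl; field).
  rewrite scal_sum, (sum_eq _ (fun k => hyp2F1_term a b c z (S k)
      - hyp2F1_term a (b + 1) (c + 1) z k * (b / c * z)))
    by (intros k _; rewrite hyp2F1_term_contiguous by lra; ring).
  rewrite minus_sum; ring.
Qed.

Lemma sum_f_R0_eventually_zero (a : nat -> R) n m :
  (forall k, (n < k)%nat -> a k = 0) -> (n <= m)%nat -> sum_f_R0 a m = sum_f_R0 a n.
Proof.
  intros Ha Hnm; induction m as [|m IH].
  - replace n with 0%nat by lia; reflexivity.
  - destruct (Nat.eq_dec n (S m)) as [<-|]; [reflexivity|].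
    simpl; rewrite IH, Ha by lia; ring.
Qed.

Lemma is_series_eventually_zero (a : nat -> R) n :
  (forall k, (n < k)%nat -> a k = 0) -> is_series a (sum_f_R0 a n).
Proof.
  intro Ha; apply is_series_Reals; intros eps Heps; exists n; intros m Hm.
  rewrite (sum_f_R0_eventually_zero a n m) by (auto || lia).
  unfold R_dist; rewrite Rminus_diag, Rabs_R0; lra.
Qed.

Lemma hyp2F1_term_opp_INR_eq0 n b c z k : (n < k)%nat -> hyp2F1_term (- INR n) b c z k = 0.
Proof. intro Hnk; unfold hyp2F1_term; rewrite poch_opp_INR_eq0 by exact Hnk; unfold Rdiv; ring. Qed.

Lemma chu_vandermonde_partial n b c N : 0 < c -> (n <= N)%nat ->
  sum_f_R0 (hyp2F1_term (- INR n) b c 1) N = poch (c - b) n / poch c n.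
Proof.
  revert b c N; induction n as [|n IH]; intros b c N Hc HnN.
  - rewrite (sum_f_R0_eventually_zero _ 0) by (auto using hyp2F1_term_opp_INR_eq0 || lia).
    unfold hyp2F1_term; simpl; field.
  - destruct N as [|N]; [lia|].
    replace (- INR (S n)) with (- INR n - 1) by (rewrite S_INR; ring).
    rewrite hyp2F1_partial_contiguous, !IH by (lia || lra).
    pose proof (poch_pos (c + 1) n ltac:(lra)); pose proof (pos_INR n).
    replace (c + 1 - (b + 1)) with (c - b) by ring.
    assert (Hshift : poch c n = c * poch (c + 1) n / (c + INR n)).
    { rewrite <- poch_succ_shift; simpl; field; lra. }
    simpl poch; rewrite Hshift; field; repeat split; lra.
Qed.

Lemma hyp2F1_opp_INR_at_1 n b c : 0 < c -> hyp2F1 (- INR n) b c 1 = poch (c - b) n / poch c n.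
Proof.
  intro Hc; rewrite <- (chu_vandermonde_partial n b c n) by (lia || lra).
  apply is_series_unique, is_series_eventually_zero.
  intros k Hk; exact (hyp2F1_term_opp_INR_eq0 n b c 1 k Hk).
Qed.

Lemma fact_double m : INR (fact (2 * m)) = 4 ^ m * INR (fact m) * poch (1 / 2) m.
Proof.
  induction m as [|m IH]; [simpl; ring|].
  replace (2 * S m)%nat with (S (S (2 * m))) by lia.
  rewrite !fact_simpl, !mult_INR, IH, !S_INR, mult_INR; simpl; field.
Qed.

Lemma fact_double_succ m : INR (fact (2 * m + 1)) = 4 ^ m * INR (fact m) * poch (3 / 2) m.
Proof.
  induction m as [|m IH]; [simpl; ring|].
  replace (2 * S m + 1)%nat with (S (S (2 * m + 1))) by lia.
  rewrite !fact_simpl, !mult_INR, IH, !S_INR, plus_INR, mult_INR; simpl; field.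
Qed.

Lemma fact_add2 k : INR (fact (k + 2)) = 2 * poch 3 k.
Proof.
  induction k as [|k IH]; [simpl; ring|].
  rewrite Nat.add_succ_l, fact_simpl, mult_INR, IH, S_INR, plus_INR; simpl; ring.
Qed.

Lemma falling_poch g m : falling g m = (-1) ^ m * poch (- g) m.
Proof. induction m as [|m IH]; simpl; [|rewrite IH]; ring. Qed.

Lemma gbinom_poch g m : gbinom g m = (-1) ^ m * poch (- g) m / INR (fact m).
Proof. unfold gbinom; rewrite falling_poch; reflexivity. Qed.

Lemma pow_neg1_inv m : (-1) ^ (S m + 1) = / (-1) ^ m.
Proof.
  rewrite <- pow_inv; replace (/ -1) with (-1) by field.
  rewrite Nat.add_1_r; simpl; ring.
Qed.

Lemma cstar_even_sqr1 alpha x m : x ^ 2 = 1 ->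
  cstar alpha x (S (S (2 * m))) = 2 * hyp1F1_term (- alpha - 1) 3 (-2 * x) (2 * m).
Proof.
  intro Hx; unfold cstar.
  rewrite (f_equal S (Nat.div2_double m) : Nat.div2 (S (S (2 * m))) = S m).
  rewrite (Nat.even_mul 2 m : Nat.even (S (S (2 * m))) = true).
  replace (- INR (S m) + 1) with (- INR m) by (rewrite S_INR; ring).
  rewrite Hx, hyp2F1_opp_INR_at_1 by lra.
  replace (1 / 2 - (alpha + 5 / 2 - INR (S m))) with (- alpha - 1 + INR m)
    by (rewrite S_INR; field).
  replace (S m - 1)%nat with m by lia.
  rewrite gbinom_poch, pow_neg1_inv; replace (- (alpha + 1)) with (- alpha - 1) by ring.
  unfold hyp1F1_term.
  replace (2 * S m)%nat with (2 * m + 2)%nat by lia.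
  replace (poch (- alpha - 1) (2 * m)) with (poch (- alpha - 1) (m + m)) by (f_equal; lia).
  rewrite poch_add, fact_add2, fact_double, pow_mult.
  replace ((-2 * x) ^ 2) with (4 * x ^ 2) by ring; rewrite Hx, Rmult_1_r.
  pose proof (poch_pos (1 / 2) m ltac:(lra)); pose proof (poch_pos 3 (2 * m) ltac:(lra)).
  pose proof (INR_fact_neq_0 m); pose proof (pow_lt 4 m ltac:(lra)).
  pose proof (pow_nonzero (-1) m ltac:(lra)).
  field; repeat split; lra.
Qed.

Lemma cstar_odd_sqr1 alpha x m : x ^ 2 = 1 ->
  cstar alpha x (S (S (2 * m + 1))) = 2 * hyp1F1_term (- alpha - 1) 3 (-2 * x) (2 * m + 1).
Proof.
  intro Hx; unfold cstar.
  replace (Nat.div2 (S (S (2 * m + 1)))) with (S m)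
    by (rewrite Nat.add_1_r; exact (f_equal S (eq_sym (Nat.div2_succ_double m)))).
  replace (Nat.even (S (S (2 * m + 1)))) with false
    by (rewrite Nat.add_1_r; change (false = Nat.even (S (2 * m)));
        rewrite Nat.even_succ, Nat.odd_mul; reflexivity).
  replace (- INR (S m) + 1) with (- INR m) by (rewrite S_INR; ring).
  rewrite Hx, hyp2F1_opp_INR_at_1 by lra.
  replace (3 / 2 - (alpha + 5 / 2 - INR (S m))) with (- alpha + INR m)
    by (rewrite S_INR; field).
  replace (S m - 1)%nat with m by lia.
  rewrite gbinom_poch, pow_neg1_inv.
  unfold hyp1F1_term.
  replace (2 * S m + 1)%nat with (2 * m + 1 + 2)%nat by lia.
  replace (poch (- alpha - 1) (2 * m + 1)) with ((- alpha - 1) * poch (- alpha) (m + m)).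
  2: { rewrite Nat.add_1_r, poch_succ_shift; replace (- alpha - 1 + 1) with (- alpha) by ring.
       do 2 f_equal; lia. }
  rewrite (poch_add (- alpha)), fact_add2, fact_double_succ, pow_add, pow_mult.
  replace ((-2 * x) ^ 2) with (4 * x ^ 2) by ring; rewrite Hx, Rmult_1_r.
  pose proof (poch_pos (3 / 2) m ltac:(lra)); pose proof (poch_pos 3 (2 * m + 1) ltac:(lra)).
  pose proof (INR_fact_neq_0 m); pose proof (pow_lt 4 m ltac:(lra)).
  pose proof (pow_nonzero (-1) m ltac:(lra)).
  field; repeat split; lra.
Qed.

Lemma ex_series_hyp1F1_term a b z : 1 <= b -> ex_series (hyp1F1_term a b z).
Proof.
  intro Hb.
  apply (@ex_series_le R_AbsRing R_CompleteNormedModule _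
           (fun k => ((Rabs a + 1) * Rabs z) ^ k / INR (fact k))).
  - intro k; change (norm (hyp1F1_term a b z k)) with (Rabs (hyp1F1_term a b z k)).
    unfold hyp1F1_term.
    pose proof (poch_pos b k ltac:(lra)); pose proof (INR_fact_lt_0 k).
    unfold Rdiv; rewrite !Rabs_mult, !Rabs_inv, <- RPow_abs, Rpow_mult_distr.
    rewrite (Rabs_pos_eq (poch b k)), (Rabs_pos_eq (INR (fact k))) by lra.
    apply Rmult_le_compat_r; [left; apply Rinv_0_lt_compat; lra|].
    apply Rmult_le_compat_r; [apply pow_le, Rabs_pos|].
    apply (Rmult_le_reg_r (poch b k)); [lra|].
    rewrite Rmult_assoc, Rinv_l, Rmult_1_r by lra; apply poch_abs_le; lra.
  - exists (exp ((Rabs a + 1) * Rabs z)).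
    eapply is_series_ext; [|apply is_exp_Reals].
    intro k; simpl; rewrite pow_n_pow; reflexivity.
Qed.

Lemma is_series_cstar_sqr1 alpha x : x ^ 2 = 1 ->
  is_series (fun n => cstar alpha x (S n)) (2 * hyp1F1 (- alpha - 1) 3 (-2 * x)).
Proof.
  intro Hx; apply is_series_decr_1.
  match goal with |- is_series _ ?l =>
    replace l with (scal 2 (Series (hyp1F1_term (- alpha - 1) 3 (-2 * x))))
  end.
  2: { change (cstar alpha x 1) with 0; unfold plus, opp, scal; simpl; unfold mult; simpl.
       rewrite Ropp_0, Rplus_0_r; reflexivity. }
  apply (is_series_ext (fun n => scal 2 (hyp1F1_term (- alpha - 1) 3 (-2 * x) n))).
  - intro k; destruct (Nat.Even_or_Odd k) as [[m ->]|[m ->]].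
    + symmetry; apply cstar_even_sqr1, Hx.
    + symmetry; apply cstar_odd_sqr1, Hx.
  - apply (@is_series_scal R_AbsRing R_NormedModule), Series_correct,
      ex_series_hyp1F1_term; lra.
Qed.

Theorem mainTheorem6 (alpha : R) (Halpha : -1 < alpha) :
  is_series (fun n => cstar alpha (-1) (S n)) (2 * hyp1F1 (- alpha - 1) 3 2) /\
  is_series (fun n => cstar alpha 1 (S n)) (2 * hyp1F1 (- alpha - 1) 3 (-2)).
Proof.
  split.
  - replace 2 with (-2 * -1) at 2 by ring; apply is_series_cstar_sqr1; ring.
  - replace (-2) with (-2 * 1) by ring; apply is_series_cstar_sqr1; ring.
Qed.
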